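(* Let $\mathbb{F}$ be a field with $\mathrm{char}(\mathbb{F})\neq 2$, let $n\geq 2$ be an integer, and let $L$ be an $n$-dimensional nonnilpotent solvable Lie algebra over $\mathbb{F}$ of breadth $1$. Then $L$ has a basis $\{x,y,z_1,z_2,\ldots,z_{n-2}\}$ such that $[x,y]=x$ and $z_1,z_2,\ldots,z_{n-2}\in Z(L)$.
   Context: For $x\in L$, the breadth of $x$ is $b(x)=\mathrm{rank}(\mathrm{ad}_x)$, and the breadth of $L$ is $b(L)=\max\{b(x)\mid x\in L\}$. $Z(L)$ denotes the center of $L$. *)

From HB Require Import structures.
From mathcomp Require Import all_boot all_order all_algebra.
Set Implicit Arguments. Unset Strict Implicit. Unset Printing Implicit Defensive.
Import GRing.Theory.
Local Open Scope ring_scope.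

Definition is_lie_bracket (F : fieldType) (V : vectType F) (br : V -> V -> V) : Prop :=
  [/\ (forall (a : F) (x y z : V), br (a *: x + y) z = a *: br x z + br y z),
      (forall (a : F) (x y z : V), br z (a *: x + y) = a *: br z x + br z y),
      (forall x : V, br x x = 0) &
      (forall x y z : V, br x (br y z) + br y (br z x) + br z (br x y) = 0)].

(* [S, T] : the subspace spanned by all brackets [s, t], s in S, t in T
   (by bilinearity it is the span of brackets of basis vectors). *)
Definition lie_comm (F : fieldType) (V : vectType F) (br : V -> V -> V)
  (S T : {vspace V}) : {vspace V} :=
  <<[seq br u v | u <- (vbasis S : seq V), v <- (vbasis T : seq V)]>>%VS.

Definition derived_series (F : fieldType) (V : vectType F) (br : V -> V -> V)
  (k : nat) : {vspace V} := iter k (fun S => lie_comm br S S) fullv.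

Definition lower_central (F : fieldType) (V : vectType F) (br : V -> V -> V)
  (k : nat) : {vspace V} := iter k (fun S => lie_comm br fullv S) fullv.

Definition lie_solvable (F : fieldType) (V : vectType F) (br : V -> V -> V) : Prop :=
  exists k, derived_series br k = 0%VS.

Definition lie_nilpotent (F : fieldType) (V : vectType F) (br : V -> V -> V) : Prop :=
  exists k, lower_central br k = 0%VS.

Definition ad_image (F : fieldType) (V : vectType F) (br : V -> V -> V) (x : V)
  : {vspace V} := <<[seq br x v | v <- (vbasis fullv : seq V)]>>%VS.

Definition breadth_elt (F : fieldType) (V : vectType F) (br : V -> V -> V) (x : V)
  : nat := \dim (ad_image br x).

Definition lie_breadth_is (F : fieldType) (V : vectType F) (br : V -> V -> V)
  (m : nat) : Prop :=
  (forall x : V, (breadth_elt br x <= m)%N) /\ (exists x : V, breadth_elt br x = m).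

Definition in_center (F : fieldType) (V : vectType F) (br : V -> V -> V) (z : V) : Prop :=
  forall y : V, br z y = 0.

From HB Require Import structures.
From mathcomp Require Import all_boot all_order all_algebra.
From Stdlib Require Import Classical.
Import GRing.Theory.
Local Open Scope ring_scope.

(* Breadth at most one means that every ad_u has rank at most one.  If
   [u,[u,v]] = 0 for all u, v, polarization together with this rank bound
   forces [L,[L,L]] = 0, so L is nilpotent.  Otherwise [u,[u,v]] = mu [u,v]
   with mu <> 0, and x := [u,v], y := -mu^-1 u satisfy [x,y] = x.  Every w
   then maps x and y to multiples of x, so w + c y - e x is central for
   suitable scalars c, e; shifting a basis of a complement of span{x,y} in
   this way gives the central vectors z_i. *)

Section Span.
Context {F : fieldType} {V : vectType F}.

Lemma basis_cat_shift_compl {X : seq V} {g : V -> V} {m : nat} :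
    free X -> \dim (<<X>>^C)%VS = m -> (forall w, g w - w \in <<X>>%VS) ->
  basis_of fullv (X ++ [seq g (vbasis (<<X>>^C))`_i | i : 'I_m <- enum 'I_m]).
Proof.
move=> freeX dimC gX; set s := [seq _ | i <- _].
rewrite basisEdim size_cat size_map size_enum_ord -dimC dimv_compl -(eqP freeX).
rewrite subnKC ?dimvS ?subvf // andbT.
rewrite -(addv_complf <<X>>) span_cat subv_add addvSl /=.
rewrite -(span_basis (vbasisP (<<X>>^C)%VS)).
apply/span_subvP => _ /(nthP 0) [j ltj <-].
have ltjm : (j < m)%N by rewrite -dimC -(size_tuple (vbasis _)).
set b := (vbasis _)`_j; rewrite -(subrK (g b) b) -opprB.
apply: memv_add; first by rewrite memvN.
by apply: memv_span; apply/mapP; exists (Ordinal ltjm); rewrite ?mem_enum.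
Qed.

End Span.

Section LieBracket.
Context {F : fieldType} {V : vectType F} {br : V -> V -> V}.
Hypothesis lieV : is_lie_bracket br.

Lemma brDl a b u : br (a + b) u = br a u + br b u.
Proof. by case: lieV => linl _ _ _; have := linl 1 a b u; rewrite !scale1r. Qed.

Lemma brDr u a b : br u (a + b) = br u a + br u b.
Proof. by case: lieV => _ linr _ _; have := linr 1 a b u; rewrite !scale1r. Qed.

Lemma br0l u : br 0 u = 0.
Proof. by apply: (addrI (br 0 u)); rewrite -brDl !addr0. Qed.

Lemma br0r u : br u 0 = 0.
Proof. by apply: (addrI (br u 0)); rewrite -brDr !addr0. Qed.

Lemma brZl k a u : br (k *: a) u = k *: br a u.
Proof. by case: lieV => linl _ _ _; have := linl k a 0 u; rewrite !addr0 br0l addr0. Qed.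

Lemma brZr u k a : br u (k *: a) = k *: br u a.
Proof. by case: lieV => _ linr _ _; have := linr k a 0 u; rewrite !addr0 br0r addr0. Qed.

Lemma brNl a u : br (- a) u = - br a u.
Proof. by rewrite -scaleN1r brZl scaleN1r. Qed.

Lemma brNr u a : br u (- a) = - br u a.
Proof. by rewrite -scaleN1r brZr scaleN1r. Qed.

Lemma brBl a b u : br (a - b) u = br a u - br b u.
Proof. by rewrite brDl brNl. Qed.

Lemma brBr u a b : br u (a - b) = br u a - br u b.
Proof. by rewrite brDr brNr. Qed.

Lemma brxx a : br a a = 0.
Proof. by case: lieV. Qed.

Lemma brC a b : br b a = - br a b.
Proof.
apply/eqP; rewrite -addr_eq0 addrC.
by have := brxx (a + b); rewrite brDl !brDr !brxx add0r addr0 => ->.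
Qed.

Lemma jacobi a b c : br a (br b c) + br b (br c a) + br c (br a b) = 0.
Proof. by case: lieV. Qed.

Lemma br_sumr u I (r : seq I) (P : pred I) (f : I -> V) :
  br u (\sum_(i <- r | P i) f i) = \sum_(i <- r | P i) br u (f i).
Proof. exact: (big_morph (br u) (brDr u) (br0r u)). Qed.

Lemma ad_span u (X : seq V) d : d \in <<X>>%VS -> br u d \in <<map (br u) X>>%VS.
Proof.
move=> Xd; rewrite (coord_span (X := in_tuple X) Xd) br_sumr.
apply: memv_suml => i _; rewrite brZr memvZ // memv_span // map_f // mem_nth //.
Qed.

Lemma mem_ad_image u v : br u v \in ad_image br u.
Proof. by apply: ad_span; rewrite (span_basis (vbasisP fullv)) memvf. Qed.

Lemma lie_comm_sub (S T W : {vspace V}) :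
    (forall s t, s \in S -> t \in T -> br s t \in W) ->
  (lie_comm br S T <= W)%VS.
Proof.
move=> brST; apply/span_subvP => _ /allpairsP [[s t] [/= sS tT ->]].
by apply: brST; apply: vbasis_mem.
Qed.

Lemma lie_nilpotent_of_br_br_eq0 :
  (forall u w v, br u (br w v) = 0) -> lie_nilpotent br.
Proof.
move=> brbr0; exists 2; apply/eqP; rewrite -subv0.
apply: lie_comm_sub => s t _ /(ad_span s); apply: subvP.
by apply/span_subvP => _ /mapP [_ /allpairsP [[a b] [_ _ ->]] ->]; rewrite brbr0 mem0v.
Qed.

End LieBracket.

Section BreadthAtMostOne.
Context {F : fieldType} {V : vectType F} {br : V -> V -> V}.
Hypothesis lieV : is_lie_bracket br.
Hypothesis breadth_le1 : forall u, (breadth_elt br u <= 1)%N.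

Lemma ad_colinear {u a : V} : br u a != 0 -> forall b, exists k, br u b = k *: br u a.
Proof.
move=> bra_neq0 b; apply/vlineP.
have /eqP -> : (<[br u a]> == ad_image br u)%VS.
  by rewrite eqEdim -memvE (mem_ad_image lieV) dim_vline bra_neq0 breadth_le1.
exact: (mem_ad_image lieV).
Qed.

Lemma br_br_eq0_of_ad_sqr_eq0 :
  (forall u v, br u (br u v) = 0) -> forall u w v, br u (br w v) = 0.
Proof.
move=> ad2_0.
have br_swap u w v : br u (br w v) = - br w (br u v).
  apply/eqP; rewrite -addr_eq0.
  by have := ad2_0 (u + w) v; rewrite !(brDl lieV) !(brDr lieV) !ad2_0 add0r addr0 => ->.
move=> u w v; apply/eqP; apply: contraT => uwv_neq0.
have wuv_neq0 : br w (- br u v) != 0 by rewrite (brNr lieV) -br_swap.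
(* ad_w has rank one, so [w,v] is a multiple of [w,-[u,v]] = [u,[w,v]] *)
have [k wv] := ad_colinear wuv_neq0 v.
by rewrite -(negbTE uwv_neq0) wv (brZr lieV) (brNr lieV) -br_swap ad2_0 scaler0 eqxx.
Qed.

Lemma exists_normal_pair : ~ lie_nilpotent br -> exists x y, x != 0 /\ br x y = x.
Proof.
move=> nonnil.
have [[u [v uuv_neq0]] | no_uuv] := classic (exists u v, br u (br u v) != 0); last first.
  case: nonnil; apply: (lie_nilpotent_of_br_br_eq0 lieV); apply: br_br_eq0_of_ad_sqr_eq0.
  by move=> u v; apply/eqP; apply: contraT => uuv_neq0; case: no_uuv; exists u, v.
have uv_neq0 : br u v != 0 by apply: contra uuv_neq0 => /eqP ->; rewrite (br0r lieV).
have [mu uuv] := ad_colinear uv_neq0 (br u v).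
have mu_neq0 : mu != 0 by apply: contra uuv_neq0 => /eqP mu0; rewrite uuv mu0 scale0r.
exists (br u v), (- mu^-1 *: u); split => //.
by rewrite (brZr lieV) (brC lieV u) uuv scalerN scaleNr opprK scalerA mulVf // scale1r.
Qed.

Section NormalPair.
Context {x y : V}.
Hypotheses (x_neq0 : x != 0) (brxy : br x y = x).

Lemma normal_pair_free : free [:: x; y].
Proof.
have y_neq0 : y != 0 by apply: contra x_neq0 => /eqP y0; rewrite -brxy y0 (br0r lieV).
rewrite free_cons seq1_free y_neq0 andbT span_seq1.
apply/negP => /vlineP [k xk]; move/eqP: x_neq0; apply.
by rewrite -brxy {1}xk (brZl lieV) (brxx lieV) scaler0.
Qed.

Let bryx : br y x = - x.
Proof. by rewrite (brC lieV) brxy. Qed.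

Lemma br_y_colinear t : exists k, br y t = k *: x.
Proof.
have yx_neq0 : br y x != 0 by rewrite bryx oppr_eq0.
have [k ->] := ad_colinear yx_neq0 t.
by exists (- k); rewrite bryx scalerN scaleNr.
Qed.

Lemma br_colinear_x w : exists c, br w x == c *: x.
Proof.
have := jacobi lieV w x y; rewrite brxy.
have [k ->] := br_y_colinear w; rewrite (brZr lieV) (brxx lieV) scaler0 addr0.
have [k' ->] := br_y_colinear (br w x); move/eqP; rewrite addr_eq0 => /eqP ->.
by exists (- k'); rewrite scaleNr.
Qed.

Lemma br_colinear_y w : exists e, br w y == e *: x.
Proof.
by have [k ywk] := br_y_colinear w; exists (- k); rewrite (brC lieV y) ywk scaleNr.
Qed.

Let c w := xchoose (br_colinear_x w).
Let e w := xchoose (br_colinear_y w).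
Let shift w := w + c w *: y - e w *: x.

Let brwx w : br w x = c w *: x.
Proof. exact/eqP/(xchooseP (br_colinear_x w)). Qed.

Let brwy w : br w y = e w *: x.
Proof. exact/eqP/(xchooseP (br_colinear_y w)). Qed.

Let br_shift_x w : br (shift w) x = 0.
Proof.
by rewrite (brBl lieV) (brDl lieV) !(brZl lieV) brwx bryx (brxx lieV) scaler0 subr0 scalerN subrr.
Qed.

Let br_shift_y w : br (shift w) y = 0.
Proof.
by rewrite (brBl lieV) (brDl lieV) !(brZl lieV) brwy brxy (brxx lieV) scaler0 addr0 subrr.
Qed.

Let br_shift_shift w w' : br (shift w) (shift w') = 0.
Proof.
(* ad_(shift w + y) has rank one and sends x to -x *)
have brsx : br (shift w + y) x = - x by rewrite (brDl lieV) br_shift_x add0r bryx.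
have sx_neq0 : br (shift w + y) x != 0 by rewrite brsx oppr_eq0.
have [k] := ad_colinear sx_neq0 (shift w').
rewrite brsx (brDl lieV) (brC lieV _ y) br_shift_y oppr0 addr0 => brss.
have := jacobi lieV y (shift w) (shift w').
rewrite brss br_shift_y (br0r lieV) (brC lieV (shift w) y) br_shift_y oppr0 (br0r lieV).
rewrite !addr0 (brZr lieV) (brNr lieV) bryx opprK => /eqP.
by rewrite scaler_eq0 (negbTE x_neq0) orbF => /eqP ->; rewrite scale0r.
Qed.

Lemma exists_central_shift :
  exists P : V -> V,
    (forall w, in_center br (P w)) /\ (forall w, P w - w \in <<[:: x; y]>>%VS).
Proof.
have shift_sub w : shift w - w \in <<[:: x; y]>>%VS.
  rewrite /shift addrAC (addrC w) addrK.
  by apply: memvB; apply: memvZ; apply: memv_span; rewrite !inE eqxx ?orbT.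
exists shift; split => // w v.
have -> : v = shift v - c v *: y + e v *: x by rewrite /shift addrAC addrNK addrK.
by rewrite (brDr lieV) (brBr lieV) !(brZr lieV) br_shift_shift br_shift_x br_shift_y !scaler0 subrr addr0.
Qed.

End NormalPair.

End BreadthAtMostOne.

Theorem theorem2p6 (F : fieldType) (V : vectType F) (n : nat)
  (br : V -> V -> V) :
  (2%:R : F) != 0 ->
  (2 <= n)%N ->
  \dim (fullv : {vspace V}) = n ->
  is_lie_bracket br ->
  lie_solvable br ->
  ~ lie_nilpotent br ->
  lie_breadth_is br 1 ->
  exists (x y : V) (z : 'I_(n - 2) -> V),
    [/\ basis_of fullv (x :: y :: [seq z i | i <- enum 'I_(n - 2)]),
        br x y = x &
        forall i : 'I_(n - 2), in_center br (z i)].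
Proof.
move=> _ _ dimV lieV _ nonnil [breadth_le1 _].
have [x [y [x_neq0 brxy]]] := exists_normal_pair lieV breadth_le1 nonnil.
have [P [P_central P_shift]] := exists_central_shift lieV breadth_le1 x_neq0 brxy.
have freexy := normal_pair_free lieV x_neq0 brxy.
have dim_compl : \dim (<<[:: x; y]>>^C)%VS = (n - 2)%N.
  by rewrite dimv_compl dimV (eqP freexy).
exists x, y, (fun i => P (vbasis (<<[:: x; y]>>^C))`_i); split => //.
exact: (basis_cat_shift_compl freexy dim_compl P_shift).
Qed.
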